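(* Let $A\in\mathbb{R}^{n\times n}$, $B\in\mathbb{R}^{n\times m}$, $C\in\mathbb{R}^{p\times n}$, $D\in\mathbb{R}^{p\times p}$ with $(A,B)$ reachable, $(C,A)$ observable, $BB^T\succ0$, $DD^T\succ0$. Fix $c>0$, and let $r^R_c$, $r$ and the sequence $(\overline{P}_t)_{t\ge0}$ be as in the context. Let $\tilde P_0\in\mathcal{P}$ with $\tilde P_0\succeq BB^T$ and define $\tilde P_{t+1}=r^R_c(\tilde P_t)$ for $t\ge0$. Then for every integer $q\ge 0$, $$\tilde P_t\succeq \overline{P}_q\qquad\text{for all } t\ge q.$$
   Context: $\mathcal{P}$ denotes the cone of $n\times n$ real symmetric positive definite matrices; $\succeq$ is the Loewner order; $\lambda_1(P)$ is the largest eigenvalue of $P$. For $P\in\mathcal{P}$ and $\theta$ with $I-\theta P\succ0$, let $\gamma(\theta,P)=\tfrac12\big[\log\det(I-\theta P)+\mathrm{tr}((I-\theta P)^{-1})-n\big]$. For $c>0$ and $P\in\mathcal{P}$, $\theta_c(P)$ denotes the unique $\theta\in(0,\lambda_1(P)^{-1})$ with $\gamma(\theta,P)=c$ (its existence and uniqueness are taken as given). Define $r^R_c(P)=A[P^{-1}+C^T(DD^T)^{-1}C-\theta_c(P)I_n]^{-1}A^T+BB^T$ and the Riccati map $r(P)=A[P^{-1}+C^T(DD^T)^{-1}C]^{-1}A^T+BB^T$. Let $\overline{P}_0=BB^T$ and $\overline{P}_{t+1}=r(\overline{P}_t)$ for $t\ge0$. *)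

From HB Require Import structures.
From mathcomp Require Import all_boot all_order all_algebra.
From mathcomp Require Import all_classical all_reals all_analysis.
Set Implicit Arguments. Unset Strict Implicit. Unset Printing Implicit Defensive.
Import Order.TTheory GRing.Theory Num.Theory.
Local Open Scope ring_scope.

Section Defs.
Variable R : realType.

Definition qform n (M : 'M[R]_n) (x : 'cV[R]_n) : R := (x^T *m M *m x) 0 0.

Definition posdef n (M : 'M[R]_n) : Prop :=
  M^T = M /\ forall x : 'cV[R]_n, x != 0 -> 0 < qform M x.

Definition loewner_ge n (P Q : 'M[R]_n) : Prop :=
  (P - Q)^T = (P - Q) /\ forall x : 'cV[R]_n, 0 <= qform (P - Q) x.

Definition reachable n m (A : 'M[R]_n) (B : 'M[R]_(n, m)) : Prop :=
  \rank (\mxrow_(k < n) (A ^+ k *m B)) = n.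

Definition observable p n (C : 'M[R]_(p, n)) (A : 'M[R]_n) : Prop :=
  \rank (\mxcol_(k < n) (C *m A ^+ k)) = n.

Definition gamma n (theta : R) (P : 'M[R]_n) : R :=
  2^-1 * (ln (\det (1%:M - theta *: P)) + \tr (invmx (1%:M - theta *: P)) - n%:R).

(* theta is "the" theta_c(P): theta in (0, lambda_1(P)^{-1}) with gamma = c.
   For P positive definite and theta > 0, theta < lambda_1(P)^{-1} iff I - theta P > 0. *)
Definition thetac_spec n (c : R) (P : 'M[R]_n) (theta : R) : Prop :=
  0 < theta /\ posdef (1%:M - theta *: P) /\ gamma theta P = c.

Definition rR n p (A : 'M[R]_n) (BBt : 'M[R]_n) (C : 'M[R]_(p, n)) (D : 'M[R]_p)
  (thetac : 'M[R]_n -> R) (P : 'M[R]_n) : 'M[R]_n :=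
  A *m invmx (invmx P + C^T *m invmx (D *m D^T) *m C - thetac P *: 1%:M) *m A^T + BBt.

Definition ric n p (A : 'M[R]_n) (BBt : 'M[R]_n) (C : 'M[R]_(p, n)) (D : 'M[R]_p)
  (P : 'M[R]_n) : 'M[R]_n :=
  A *m invmx (invmx P + C^T *m invmx (D *m D^T) *m C) *m A^T + BBt.

End Defs.

From HB Require Import structures.
From mathcomp Require Import all_boot all_order all_algebra.
From mathcomp Require Import all_classical all_reals all_analysis.
From mathcomp Require Import lra.
Import Order.TTheory GRing.Theory Num.Theory.
Set Implicit Arguments.
Unset Strict Implicit.
Unset Printing Implicit Defensive.

Local Open Scope ring_scope.

(* Both recursions are built from the map M |-> A M^-1 A^T + BB^T, which is
   Loewner-antitone on positive definite matrices because inversion is.  The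
   robust step feeds it M - theta I <= M, so it dominates the standard step
   r(P); and I - theta P > 0 makes P^-1 - theta I > 0 as well, so all iterates
   stay positive definite and above BB^T.  Monotonicity of r then propagates
   P~_t >= Pbar_q from (t, q) to (t + 1, q + 1), starting from P~_t >= BB^T. *)

Section IterateComparison.
Variables (T : Type) (ge : T -> T -> Prop) (S : T -> Prop) (f g : T -> T) (b x0 : T).
Hypothesis ge_trans : forall {x y z}, ge x y -> ge y z -> ge x z.
Hypotheses (Sf : forall {x}, S x -> S (f x)) (Sg : forall {x}, S x -> S (g x)).
Hypotheses (Sb : S b) (Sx0 : S x0).
Hypothesis g_mono : forall {x y}, S x -> S y -> ge x y -> ge (g x) (g y).
Hypothesis f_ge_g : forall {x}, S x -> ge (f x) (g x).
Hypothesis f_ge_b : forall {x}, S x -> ge (f x) b.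
Hypothesis x0_ge_b : ge x0 b.

Lemma iter_ge_iter q t : (q <= t)%N -> ge (iter t f x0) (iter q g b).
Proof.
have Sfx t' : S (iter t' f x0) by elim: t' => //= t' /Sf.
have Sgb q' : S (iter q' g b) by elim: q' => //= q' /Sg.
elim: q t => [|q IHq] [|t] //= le_qt; first exact: f_ge_b.
apply: (ge_trans (f_ge_g (Sfx t))).
exact: g_mono (Sfx t) (Sgb q) (IHq t le_qt).
Qed.

End IterateComparison.

Section QuadraticForms.
Variables (R : realType) (n : nat).
Implicit Types (M N P Q : 'M[R]_n) (x y : 'cV[R]_n).

Definition dot x y : R := (x^T *m y) 0 0.

Definition psd M : Prop := M^T = M /\ forall x, 0 <= qform M x.

Lemma qformD M N x : qform (M + N) x = qform M x + qform N x.
Proof. by rewrite /qform mulmxDr mulmxDl mxE. Qed.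

Lemma qformB M N x : qform (M - N) x = qform M x - qform N x.
Proof. by rewrite /qform mulmxBr mulmxBl !mxE. Qed.

Lemma qformZ (a : R) M x : qform (a *: M) x = a * qform M x.
Proof. by rewrite /qform -scalemxAr -scalemxAl mxE. Qed.

Lemma qformZr (a : R) M x : qform M (a *: x) = a * a * qform M x.
Proof.
rewrite /qform linearZ /= [(_ *: x)^T]linearZ /= -!scalemxAl scalerA mxE.
by rewrite mulrC.
Qed.

Lemma qform1 x : qform 1%:M x = dot x x.
Proof. by rewrite /qform /dot mulmx1. Qed.

Lemma qformr0 M : qform M 0 = 0.
Proof. by rewrite /qform mulmx0 mxE. Qed.

Lemma qform_congr k (A : 'M[R]_(n, k)) (M : 'M[R]_k) x :
  qform (A *m M *m A^T) x = qform M (A^T *m x).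
Proof. by rewrite /qform trmx_mul trmxK !mulmxA. Qed.

Lemma dotC x y : dot x y = dot y x.
Proof. by rewrite /dot -[y^T *m x]trmxK trmx_mul trmxK [in RHS]mxE. Qed.

Lemma dotZr (a : R) x : dot x (a *: x) = a * dot x x.
Proof. by rewrite /dot -scalemxAr mxE. Qed.

Lemma dot_ge0 x : 0 <= dot x x.
Proof. by rewrite /dot mxE; apply: sumr_ge0 => i _; rewrite mxE -expr2 sqr_ge0. Qed.

Lemma psd_scale1 (a : R) : 0 <= a -> psd (a *: 1%:M).
Proof.
move=> a_ge0; split; first by rewrite linearZ /= trmx1.
by move=> x; rewrite qformZ qform1 mulr_ge0 ?dot_ge0.
Qed.

Lemma psdD M N : psd M -> psd N -> psd (M + N).
Proof.
move=> [sM M_ge0] [sN N_ge0]; split; first by rewrite linearD /= sM sN.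
by move=> x; rewrite qformD addr_ge0.
Qed.

Lemma psd_congr k (A : 'M[R]_(n, k)) (M : 'M[R]_k) :
  M^T = M -> (forall z, 0 <= qform M z) -> psd (A *m M *m A^T).
Proof.
move=> sM M_ge0; split; first by rewrite !trmx_mul trmxK sM mulmxA.
by move=> x; rewrite qform_congr.
Qed.

Lemma posdef_sym M : posdef M -> M^T = M.
Proof. by case. Qed.

Lemma posdef_psd M : posdef M -> psd M.
Proof.
move=> [sM M_gt0]; split=> // x.
by have [->|/M_gt0/ltW //] := eqVneq x 0; rewrite qformr0.
Qed.

Lemma posdef_unitmx M : posdef M -> M \in unitmx.
Proof.
move=> [sM M_gt0]; rewrite unitmxE unitfE; apply/negP => /det0P [v v_neq0 vM].
have Mv : M *m v^T = 0 by rewrite -sM -trmx_mul vM trmx0.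
have := M_gt0 v^T; rewrite trmx_eq0 v_neq0 => /(_ isT).
by rewrite /qform -mulmxA Mv mulmx0 mxE ltxx.
Qed.

Lemma posdef_addr M N : posdef M -> psd N -> posdef (M + N).
Proof.
move=> [sM M_gt0] [sN N_ge0]; split; first by rewrite linearD /= sM sN.
by move=> x /M_gt0 Mx_gt0; rewrite qformD ltr_wpDr.
Qed.

Lemma qform_invmx M x : posdef M -> qform (invmx M) x = qform M (invmx M *m x).
Proof.
move=> PM; rewrite /qform trmx_mul trmx_inv (posdef_sym PM) !mulmxA.
by rewrite -[x^T *m _ *m M]mulmxA mulVmx ?posdef_unitmx // mulmx1.
Qed.

Lemma posdef_invmx M : posdef M -> posdef (invmx M).
Proof.
move=> PM; split; first by rewrite trmx_inv (posdef_sym PM).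
move=> x x_neq0; rewrite qform_invmx //; apply: PM.2.
apply: contraNneq x_neq0 => Mx0.
by rewrite -(mulKVmx (posdef_unitmx PM) x) Mx0 mulmx0.
Qed.

(* The gap between the two sides is qform M (y - M^-1 x) >= 0. *)
Lemma qform_invmx_ge M x y : posdef M ->
  2 * dot x y - qform M y <= qform (invmx M) x.
Proof.
move=> PM; have uM := posdef_unitmx PM; set Mi := invmx M.
have MMi (u : 'rV[R]_n) : u *m M *m Mi = u by rewrite -mulmxA mulmxV ?mulmx1.
have MiM (u : 'rV[R]_n) : u *m Mi *m M = u by rewrite -mulmxA mulVmx ?mulmx1.
have gap : (y - Mi *m x)^T *m M *m (y - Mi *m x) =
    y^T *m M *m y - x^T *m y - y^T *m x + x^T *m Mi *m x.
  rewrite [(y - _)^T]linearB /= trmx_mul trmx_inv (posdef_sym PM) -/Mi.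
  rewrite !mulmxBl !mulmxBr !mulmxA MMi MiM.
  by rewrite opprB !addrA [LHS]addrAC (addrAC (y^T *m M *m y)).
have entryD (a b : 'M[R]_1) : (a + b) 0 0 = a 0 0 + b 0 0 by rewrite mxE.
have entryN (a : 'M[R]_1) : (- a) 0 0 = - a 0 0 by rewrite mxE.
have := (posdef_psd PM).2 (y - Mi *m x).
by rewrite /qform gap !entryD !entryN -/(dot y x) -/(dot x y) (dotC y x); lra.
Qed.

(* Take y := th x above: x^T M^-1 x - th |x|^2 >= th x^T (I - th M) x > 0. *)
Lemma posdef_invmx_subr M (th : R) : posdef M -> 0 < th ->
  posdef (1%:M - th *: M) -> posdef (invmx M - th *: 1%:M).
Proof.
move=> PM th_gt0 [_ I_thM_gt0]; split.
  by rewrite linearB /= trmx_inv (posdef_sym PM) linearZ /= trmx1.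
move=> x /I_thM_gt0; rewrite qformB qformZ qform1 => gap_gt0.
have := qform_invmx_ge x (th *: x) PM; rewrite dotZr qformZr.
rewrite qformB qformZ qform1.
have := mulr_gt0 th_gt0 gap_gt0; nra.
Qed.

End QuadraticForms.

Section LoewnerOrder.
Variables (R : realType) (n : nat).
Implicit Types (M N P Q : 'M[R]_n).

Lemma loewner_trans P Q S : loewner_ge P Q -> loewner_ge Q S -> loewner_ge P S.
Proof. by move=> PQ QS; have := psdD PQ QS; rewrite addrA subrK. Qed.

Lemma loewner_addr P Q S : loewner_ge P Q -> loewner_ge (P + S) (Q + S).
Proof. by rewrite /loewner_ge opprD addrACA subrr addr0. Qed.

Lemma loewner_subr P (a : R) : 0 <= a -> loewner_ge P (P - a *: 1%:M).
Proof. by rewrite /loewner_ge opprB addrC subrK; apply: psd_scale1. Qed.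

Lemma loewner_ge_psd P Q : psd Q -> loewner_ge (P + Q) P.
Proof. by rewrite /loewner_ge addrAC subrr add0r. Qed.

Lemma loewner_congr k (A : 'M[R]_(k, n)) P Q :
  loewner_ge P Q -> loewner_ge (A *m P *m A^T) (A *m Q *m A^T).
Proof.
by move=> [sPQ PQ_ge0]; rewrite /loewner_ge -mulmxBl -mulmxBr; apply: psd_congr.
Qed.

Lemma loewner_invmx P Q : posdef P -> posdef Q -> loewner_ge P Q ->
  loewner_ge (invmx Q) (invmx P).
Proof.
move=> PP PQ [_ PQ_ge0]; split.
  by rewrite linearB /= !trmx_inv (posdef_sym PP) (posdef_sym PQ).
move=> x; rewrite qformB subr_ge0; set y := invmx P *m x.
have Pix : qform (invmx P) x = dot x y by rewrite /qform /dot /y mulmxA.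
have Py : qform P y = qform (invmx P) x by rewrite qform_invmx.
have := PQ_ge0 y; rewrite qformB subr_ge0.
have := qform_invmx_ge x y PQ; lra.
Qed.

End LoewnerOrder.

Section RiccatiMaps.
Variables (R : realType) (n p : nat).
Variables (A : 'M[R]_n) (BBt : 'M[R]_n) (C : 'M[R]_(p, n)) (D : 'M[R]_p).
Hypotheses (PBBt : posdef BBt) (PDDt : posdef (D *m D^T)).

Let update (M : 'M[R]_n) := A *m invmx M *m A^T + BBt.

Lemma update_posdef M : posdef M -> posdef (update M).
Proof.
move=> /posdef_invmx /posdef_psd [sMi Mi_ge0].
by rewrite /update addrC; apply: posdef_addr; last exact: psd_congr.
Qed.

Lemma update_ge M : posdef M -> loewner_ge (update M) BBt.
Proof.
move=> /posdef_invmx /posdef_psd [sMi Mi_ge0].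
by rewrite /update addrC; apply: loewner_ge_psd; apply: psd_congr.
Qed.

Lemma update_antitone M N : posdef M -> posdef N -> loewner_ge M N ->
  loewner_ge (update N) (update M).
Proof.
move=> PM PN MN; rewrite /update; apply: loewner_addr; apply: loewner_congr.
exact: loewner_invmx.
Qed.

Lemma psd_measurement_term : psd (C^T *m invmx (D *m D^T) *m C).
Proof.
have [sDi Di_ge0] := posdef_psd (posdef_invmx PDDt).
by have := psd_congr C^T sDi Di_ge0; rewrite trmxK.
Qed.

Lemma info_posdef P : posdef P -> posdef (invmx P + C^T *m invmx (D *m D^T) *m C).
Proof. by move=> /posdef_invmx PPi; apply: posdef_addr psd_measurement_term. Qed.

Lemma ric_posdef P : posdef P -> posdef (ric A BBt C D P).
Proof. by move=> /info_posdef; apply: update_posdef. Qed.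

Lemma ric_mono P Q : posdef P -> posdef Q -> loewner_ge P Q ->
  loewner_ge (ric A BBt C D P) (ric A BBt C D Q).
Proof.
move=> PP PQ PQge; apply: update_antitone; [exact: info_posdef.. |].
by apply: loewner_addr; apply: loewner_invmx.
Qed.

Section Robust.
Variables (c : R) (thetac : 'M[R]_n -> R) (P : 'M[R]_n).
Hypotheses (PP : posdef P) (theta_spec : thetac_spec c P (thetac P)).

Lemma robust_info_posdef :
  posdef (invmx P + C^T *m invmx (D *m D^T) *m C - thetac P *: 1%:M).
Proof.
have [th_gt0 [PI_thP _]] := theta_spec.
rewrite addrAC; apply: posdef_addr psd_measurement_term.
exact: posdef_invmx_subr.
Qed.

Lemma rR_posdef : posdef (rR A BBt C D thetac P).
Proof. exact: update_posdef robust_info_posdef. Qed.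

Lemma rR_ge_BBt : loewner_ge (rR A BBt C D thetac P) BBt.
Proof. exact: update_ge robust_info_posdef. Qed.

Lemma rR_ge_ric : loewner_ge (rR A BBt C D thetac P) (ric A BBt C D P).
Proof.
apply: update_antitone robust_info_posdef _; first exact: info_posdef.
by apply: loewner_subr; apply: ltW; case: theta_spec.
Qed.

End Robust.
End RiccatiMaps.

Theorem lemma4 (R : realType) (n m p : nat)
  (A : 'M[R]_n) (B : 'M[R]_(n, m)) (C : 'M[R]_(p, n)) (D : 'M[R]_p)
  (c : R) (thetac : 'M[R]_n -> R) (P0 : 'M[R]_n) :
  reachable A B -> observable C A ->
  posdef (B *m B^T) -> posdef (D *m D^T) -> 0 < c ->
  (forall P : 'M[R]_n, posdef P -> thetac_spec c P (thetac P)) ->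
  (forall (P : 'M[R]_n) (th : R), posdef P -> thetac_spec c P th -> th = thetac P) ->
  posdef P0 -> loewner_ge P0 (B *m B^T) ->
  forall q t : nat, (q <= t)%N ->
    loewner_ge (iter t (rR A (B *m B^T) C D thetac) P0)
               (iter q (ric A (B *m B^T) C D) (B *m B^T)).
Proof.
move=> _ _ PBBt PDDt _ theta_spec _ PP0 P0_ge q t le_qt.
apply: (iter_ge_iter (S := @posdef R n) (@loewner_trans R n)) => //.
- by move=> P PP; apply: rR_posdef => //; apply: theta_spec.
- by move=> P PP; apply: ric_posdef.
- by move=> P Q PP PQ; apply: ric_mono.
- by move=> P PP; apply: rR_ge_ric => //; apply: theta_spec.
- by move=> P PP; apply: rR_ge_BBt => //; apply: theta_spec.
Qed.
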